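(* Let $\mathbf{X}$ be $(\epsilon,\delta)$-kernel learnable from $\mathbf{Z}$ using $T(\epsilon,\delta)$ samples, and suppose that $0<d_{TV}(\mathbf{X},\mathbf{X}')=\kappa<1$. If $T_0>\max\{T(\epsilon,\delta),C\cdot\frac{\log(1/\delta)}{\epsilon^2}\}$ (for a suitable absolute constant $C$), then $\mathbf{X}'$ is $(2\epsilon+2\kappa,2\delta)$-kernel learnable from $T_0$ samples using $\mathbf{Z}$.
   Context: Let $\mathbf{Y},\mathbf{Z}$ be distributions supported on $\mathbb{Z}$. $\mathbf{Y}$ is $(\epsilon,\delta)$-kernel learnable from $T$ samples using $\mathbf{Z}$ if the following holds: for every $T_1\ge T$, if $\hat Y=\{y_1,\dots,y_{T_1}\}$ is a multiset of $T_1$ i.i.d. samples from $\mathbf{Y}$ and $\mathbf{U}_{\hat Y}$ is the uniform distribution over $\hat Y$, then with probability $1-\delta$ over $\hat Y$ we have $d_{TV}(\mathbf{U}_{\hat Y}+\mathbf{Z},\mathbf{Y})\le\epsilon$ (here $+$ denotes the sum of independent random variables). $d_{TV}$ is total variation distance. *)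

From HB Require Import structures.
From mathcomp Require Import all_boot all_order all_algebra.
From mathcomp Require Import all_classical all_reals all_analysis.
From mathcomp Require Import Rstruct.
From Stdlib Require Import Rdefinitions.
Set Implicit Arguments. Unset Strict Implicit. Unset Printing Implicit Defensive.
Import Order.TTheory GRing.Theory Num.Theory.
Local Open Scope classical_set_scope.
Local Open Scope ring_scope.

Record distZ := DistZ {
  dpmf : int -> R;
  dpmf_ge0 : forall z, 0 <= dpmf z;
  dpmf_sum1 : (\esum_(z in [set: int]) (dpmf z)%:E = 1)%E
}.

Definition dTV (p q : int -> R) : \bar R :=
  ((1/2)%:E * \esum_(z in [set: int]) (`|p z - q z|)%:E)%E.

(* dpmf of U_{Yhat} + Z, where Yhat = {y_1,...,y_T1} (a multiset, given as a
   tuple) and U_{Yhat} is uniform over the multiset: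
   P(U + Z = x) = (1/T1) * sum_i P(Z = x - y_i). *)
Definition unif_plus (T1 : nat) (s : T1.-tuple int) (Zd : distZ) (x : int) : R :=
  \sum_(i < T1) (dpmf Zd (x - tnth s i)) / T1%:R.

Definition prob_iid (Y : distZ) (T1 : nat) (E : T1.-tuple int -> Prop) : \bar R :=
  (\esum_(s in [set s : T1.-tuple int | E s]) (\prod_(i < T1) dpmf Y (tnth s i))%:E)%E.

Definition kernel_learnable (Y Zd : distZ) (eps delta : R) (T : nat) : Prop :=
  forall T1 : nat, (T <= T1)%nat ->
    (prob_iid Y (fun s : T1.-tuple int => (dTV (unif_plus s Zd) (dpmf Y) <= eps%:E)%E)
      >= (1 - delta)%:E)%E.

From HB Require Import structures.
From mathcomp Require Import all_boot all_order all_algebra.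
From mathcomp Require Import all_classical all_reals all_analysis.
From mathcomp Require Import Rstruct.
From Stdlib Require Import Rdefinitions.
From mathcomp Require Import ring lra.
Set Implicit Arguments. Unset Strict Implicit. Unset Printing Implicit Defensive.
Import Order.TTheory GRing.Theory Num.Theory.
Local Open Scope ring_scope.
Local Open Scope classical_set_scope.

(* Couple n samples s from X with n samples t from X' coordinatewise by the
   maximal coupling of X and X', under which a coordinate differs with
   probability kappa.  Outside an event of probability at most delta the tuples
   differ in at most (kappa + eps) n coordinates: this is a Chernoff bound for
   the exponential moment with tilt eps / 4, and it is where C = 8 comes from.
   Moving one of the n points of the empirical distribution moves U_s + Z by at
   most 1/n in total variation, so on that event
   d(U_t + Z, X') <= (kappa + eps) + d(U_s + Z, X) + kappa.  Hence a sample that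
   is eps-good for X is coupled, up to probability delta, with a sample that is
   (2 eps + 2 kappa)-good for X', and X' fails with probability at most
   delta + delta. *)

Lemma esumZl (T : choiceType) (S : set T) (c : R) (a : T -> \bar R) :
  0 <= c -> (forall x, (0 <= a x)%E) ->
  \esum_(i in S) (c%:E * a i)%E = (c%:E * \esum_(i in S) a i)%E.
Proof.
move=> c0 a0; rewrite /esum -ereal_supZl //; last first.
  by apply/set0P; exists 0%E; exists set0; [exact: fsets_set0 | rewrite fsbig_set0].
congr ereal_sup; apply/seteqP; split => x /= [X HX <-].
  by exists (\sum_(i \in X) a i)%E; [exists X | rewrite ge0_mule_fsumr].
by case: HX => [Y HY <-]; exists Y => //; rewrite ge0_mule_fsumr.
Qed.

Lemma esum_if_eq (T : choiceType) (a : T) (v : R) : 0 <= v ->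
  \esum_(x in [set: T]) (if x == a then v else 0)%:E = v%:E.
Proof.
move=> v0; rewrite -(esum_set1 (t := a) (a := fun _ => v%:E)) ?lee_fin //.
rewrite [RHS]esum_mkcond; apply: eq_esum => x _.
case: (eqVneq x a) => [->|xa]; first by rewrite mem_set.
by rewrite memNset //; apply/eqP.
Qed.

Lemma esum_swap (A B : choiceType) (a : A -> B -> \bar R) :
  (forall x y, (0 <= a x y)%E) ->
  \esum_(x in [set: A]) \esum_(y in [set: B]) a x y =
  \esum_(y in [set: B]) \esum_(x in [set: A]) a x y.
Proof.
move=> a0; rewrite !(esum_esum (J := fun _ => setT)) //.
rewrite (reindex_esum ([set: B] `*`` (fun _ => [set: A])) _ (fun x => (x.2, x.1))) //.
split=> [[x y] _ //|[x y] [x' y'] _ _ [-> ->] //|[x y] _]; by exists (y, x).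
Qed.

Lemma esum_tuple_prod (T : choiceType) n (f : 'I_n -> T -> R) (c : 'I_n -> R) :
  (forall i z, 0 <= f i z) ->
  (forall i, (\esum_(z in [set: T]) (f i z)%:E = (c i)%:E)%E) ->
  (\esum_(s in [set: n.-tuple T]) (\prod_(i < n) f i (tnth s i))%:E =
   (\prod_(i < n) c i)%:E)%E.
Proof.
elim: n f c => [|n IH] f c f0 fc.
  rewrite big_ord0 (_ : [set: 0.-tuple T] = [set [tuple]]); last first.
    by apply/seteqP; split => // t _; rewrite (tuple0 t).
  by rewrite esum_set1 big_ord0.
have c0 i : 0 <= c i by rewrite -lee_fin -fc; apply: esum_ge0 => z _; rewrite lee_fin.
rewrite (reindex_esum ([set: T] `*`` (fun _ => [set: n.-tuple T])) _
   (fun xt : T * n.-tuple T => [tuple of xt.1 :: xt.2])); last first.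
  split=> [xt _ //|[x t] [x' t'] _ _ /= /(congr1 val) [-> /val_inj -> //]|s _].
  by exists (thead s, behead_tuple s) => //=; rewrite [RHS]tuple_eta.
rewrite -(esum_esum (J := fun _ => [set: n.-tuple T])
  (a := fun x t => (\prod_(i < n.+1) f i (tnth [tuple of x :: t] i))%:E)); last first.
  by move=> x t _ _; rewrite lee_fin prodr_ge0.
transitivity (\esum_(x in [set: T])
    ((f ord0 x)%:E * (\prod_(i < n) c (lift ord0 i))%:E))%E.
  apply: eq_esum => x _.
  rewrite -(IH (fun i => f (lift ord0 i))) // -esumZl //; last first.
    by move=> t; rewrite lee_fin prodr_ge0.
  apply: eq_esum => t _; rewrite big_ord_recl EFinM tnth0.
  by congr (_ * _%:E)%E; apply: eq_bigr => i _; rewrite tnthS.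
under eq_esum do rewrite muleC.
rewrite esumZl => [||x]; last by rewrite lee_fin.
  by rewrite fc -EFinM big_ord_recl mulrC.
exact: prodr_ge0.
Qed.

Definition hamming (T : eqType) n (s t : n.-tuple T) : nat :=
  \sum_(i < n) (tnth s i != tnth t i).

Lemma hamming_le (T : eqType) n (s t : n.-tuple T) : (hamming s t <= n)%nat.
Proof.
rewrite -[X in (_ <= X)%nat]card_ord -sum1_card.
by apply: leq_sum => i _; exact: leq_b1.
Qed.

Lemma hammingC (T : eqType) n (s t : n.-tuple T) : hamming s t = hamming t s.
Proof. by apply: eq_bigr => i _; rewrite eq_sym. Qed.

Lemma prod_if_eq_hamming (T : eqType) n (s t : n.-tuple T) (e : R) :
  \prod_(i < n) (if tnth s i == tnth t i then 1 else e) = e ^+ hamming s t.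
Proof.
rewrite -prodrXr; apply: eq_bigr => i _.
by case: eqP => _; rewrite ?expr0 ?expr1.
Qed.

Lemma expR_ge1 (x : R) : 0 <= x -> 1 <= expR x.
Proof. by move=> x0; rewrite -[leLHS]exp.expR0 ler_expR. Qed.

Lemma expR_le_quad (l : R) : l <= 1/2 -> expR l <= 1 + l + 2 * l ^+ 2.
Proof.
move=> l_le.
have inv_le : expR l * (1 - l) <= 1.
  apply: (le_trans (ler_wpM2l (expR_ge0 l) (expR_ge1Dx (- l)))).
  by rewrite -exp.expRD subrr exp.expR0.
have quad_ge : 1 <= (1 + l + 2 * l ^+ 2) * (1 - l).
  have : 0 <= l ^+ 2 * (1 - 2 * l) by rewrite mulr_ge0 ?sqr_ge0 //; lra.
  by rewrite expr2; nra.
by rewrite -(@ler_pM2r _ (1 - l)); [apply: le_trans quad_ge | lra].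
Qed.

Lemma chernoff_bound (kappa eps delta : R) (n : nat) :
  0 <= kappa <= 1 -> 0 < eps <= 2 -> 0 < delta ->
  8 * ln (1 / delta) / eps ^+ 2 <= n%:R ->
  expR (- (eps / 4 * ((kappa + eps) * n%:R))) *
    (1 - kappa + expR (eps / 4) * kappa) ^+ n <= delta.
Proof.
move=> /andP[k0 k1] /andP[e0 e2] d0 n_ge.
set l := eps / 4.
have expR_l : expR l <= 1 + l + 2 * l ^+ 2 by apply: expR_le_quad; rewrite /l; lra.
have expR_l_ge1 : 1 <= expR l by apply: expR_ge1; rewrite /l; lra.
have base_le : 1 - kappa + expR l * kappa <= expR (kappa * (l + 2 * l ^+ 2)).
  by have := expR_ge1Dx (kappa * (l + 2 * l ^+ 2)); nra.
have base_pow : (1 - kappa + expR l * kappa) ^+ n <=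
    expR (n%:R * (kappa * (l + 2 * l ^+ 2))).
  by rewrite expRM_natl; apply: lerXn2r => //; rewrite nnegrE; nra.
apply: (le_trans (ler_wpM2l (expR_ge0 _) base_pow)).
rewrite -exp.expRD -[leRHS](@lnK _ delta) ?posrE // ler_expR.
have eps2 : 0 < eps ^+ 2 by rewrite exprn_gt0.
move: n_ge; rewrite ler_pdivrMr // div1r lnV ?posrE // => n_ge.
have slack : 0 <= n%:R * (eps * eps) * (1 - kappa).
  by apply: mulr_ge0; [apply: mulr_ge0 => //; nra | lra].
rewrite /l !expr2 in n_ge *; nra.
Qed.

Section MaximalCoupling.
Variables (T : choiceType) (p q : T -> R) (kappa : R).
Hypotheses (p_ge0 : forall a, 0 <= p a) (q_ge0 : forall a, 0 <= q a).
Hypotheses (p_sum1 : (\esum_(a in [set: T]) (p a)%:E = 1)%E)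
           (q_sum1 : (\esum_(a in [set: T]) (q a)%:E = 1)%E).
Hypotheses (kappa_gt0 : 0 < kappa)
           (dist_pq : (\esum_(a in [set: T]) (`|p a - q a|)%:E = (2 * kappa)%:E)%E).

Definition overlap a := Num.min (p a) (q a).
Definition excess (f : T -> R) a := f a - overlap a.

Lemma overlap_ge0 a : 0 <= overlap a.
Proof. by rewrite le_min p_ge0 q_ge0. Qed.

Lemma excess_p_ge0 a : 0 <= excess p a.
Proof. by rewrite subr_ge0 ge_min lexx. Qed.

Lemma excess_q_ge0 a : 0 <= excess q a.
Proof. by rewrite subr_ge0 ge_min lexx orbT. Qed.

Lemma excessD a : excess p a + excess q a = `|p a - q a|.
Proof.
rewrite /excess /overlap minEle; case: leP => [pq|qp].
  by rewrite ler0_norm ?subr_le0 //; lra.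
by rewrite gtr0_norm ?subr_gt0 //; lra.
Qed.

Lemma overlap_excess_sums :
  [/\ (\esum_(a in [set: T]) (overlap a)%:E = (1 - kappa)%:E)%E,
      (\esum_(a in [set: T]) (excess p a)%:E = kappa%:E)%E &
      (\esum_(a in [set: T]) (excess q a)%:E = kappa%:E)%E].
Proof.
have esumD_EFin (f g : T -> R) : (forall a, 0 <= f a) -> (forall a, 0 <= g a) ->
    (\esum_(a in [set: T]) (f a + g a)%:E =
     \esum_(a in [set: T]) (f a)%:E + \esum_(a in [set: T]) (g a)%:E)%E.
  by move=> f0 g0; under eq_esum do rewrite EFinD; apply: esumD => a _; rewrite lee_fin.
set A := (\esum_(a in _) (overlap a)%:E)%E.
set B := (\esum_(a in _) (excess p a)%:E)%E.
set C := (\esum_(a in _) (excess q a)%:E)%E.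
have AB : (A + B = 1)%E.
  rewrite -(esumD_EFin _ _ overlap_ge0 excess_p_ge0) -p_sum1.
  by under eq_esum do rewrite subrKC.
have AC : (A + C = 1)%E.
  rewrite -(esumD_EFin _ _ overlap_ge0 excess_q_ge0) -q_sum1.
  by under eq_esum do rewrite subrKC.
have BC : (B + C = (2 * kappa)%:E)%E.
  rewrite -(esumD_EFin _ _ excess_p_ge0 excess_q_ge0) -dist_pq.
  by under eq_esum do rewrite excessD.
have /andP[finA finB] : (A \is a fin_num) && (B \is a fin_num) by rewrite -fin_numD AB.
have /andP[_ finC] : (A \is a fin_num) && (C \is a fin_num) by rewrite -fin_numD AC.
move: AB AC BC; rewrite -(fineK finA) -(fineK finB) -(fineK finC) -!EFinD.
by move=> [AB] [AC] [BC]; split; congr (_%:E); lra.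
Qed.

(* [coupling 1] is the maximal coupling of [p] and [q]; larger weights [w]
   bound its exponential tilt in the Chernoff argument. *)
Definition coupling (w : R) (a b : T) :=
  (if a == b then overlap a else 0) + w * (excess p a * excess q b) / kappa.

Lemma excess_prod_ge0 a b : 0 <= excess p a * excess q b / kappa.
Proof. by rewrite divr_ge0 ?(ltW kappa_gt0) ?mulr_ge0 ?excess_p_ge0 ?excess_q_ge0. Qed.

Lemma coupling_ge0 w a b : 0 <= w -> 0 <= coupling w a b.
Proof.
move=> w0; rewrite /coupling -mulrA; apply: addr_ge0.
  by case: ifP; rewrite ?overlap_ge0.
exact: mulr_ge0 w0 (excess_prod_ge0 a b).
Qed.

Lemma esum_coupling_row w a : 0 <= w ->
  (\esum_(b in [set: T]) (coupling w a b)%:E = (overlap a + w * excess p a)%:E)%E.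
Proof.
move=> w0; have [_ _ sum_q] := overlap_excess_sums.
under eq_esum do rewrite EFinD.
rewrite esumD; last 2 first.
- by move=> b _; rewrite lee_fin; case: ifP; rewrite ?overlap_ge0.
- by move=> b _; rewrite lee_fin -mulrA mulr_ge0 ?excess_prod_ge0.
rewrite (eq_esum (b := fun b => (if b == a then overlap a else 0)%:E)); last first.
  by move=> b _; rewrite eq_sym.
rewrite esum_if_eq ?overlap_ge0 //.
under eq_esum do rewrite mulrA mulrAC EFinM.
rewrite esumZl; last 2 first.
- by rewrite divr_ge0 ?(ltW kappa_gt0) ?mulr_ge0 ?excess_p_ge0.
- by move=> b; rewrite lee_fin excess_q_ge0.
by rewrite sum_q -EFinM -EFinD divfK ?gt_eqF.
Qed.

Lemma esum_coupling_col w b : 0 <= w ->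
  (\esum_(a in [set: T]) (coupling w a b)%:E = (overlap b + w * excess q b)%:E)%E.
Proof.
move=> w0; have [_ sum_p _] := overlap_excess_sums.
under eq_esum do rewrite EFinD.
rewrite esumD; last 2 first.
- by move=> a _; rewrite lee_fin; case: ifP; rewrite ?overlap_ge0.
- by move=> a _; rewrite lee_fin -mulrA mulr_ge0 ?excess_prod_ge0.
rewrite (eq_esum (b := fun a => (if a == b then overlap b else 0)%:E)); last first.
  by move=> a _; case: eqP => [->|].
rewrite esum_if_eq ?overlap_ge0 //.
rewrite (eq_esum (b := fun a => ((w * excess q b / kappa)%:E * (excess p a)%:E)%E)); last first.
  by move=> a _; rewrite -EFinM; congr (_%:E); ring.
rewrite esumZl; last 2 first.
- by rewrite divr_ge0 ?(ltW kappa_gt0) ?mulr_ge0 ?excess_q_ge0.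
- by move=> a; rewrite lee_fin excess_p_ge0.
by rewrite sum_p -EFinM -EFinD divfK ?gt_eqF.
Qed.

Lemma esum_overlap_scaled_excess w : 0 <= w ->
  (\esum_(a in [set: T]) (overlap a + w * excess p a)%:E = (1 - kappa + w * kappa)%:E)%E.
Proof.
move=> w0; have [sum_o sum_p _] := overlap_excess_sums.
under eq_esum do rewrite EFinD EFinM.
rewrite esumD; last 2 first.
- by move=> a _; rewrite lee_fin overlap_ge0.
- by move=> a _; rewrite -EFinM lee_fin mulr_ge0 ?excess_p_ge0.
by rewrite esumZl // ?sum_o ?sum_p // => a; rewrite lee_fin excess_p_ge0.
Qed.

Lemma coupling_tilt_le w a b : 1 <= w ->
  coupling 1 a b * (if a == b then 1 else w) <= coupling w a b.
Proof.
move=> w1; rewrite /coupling mul1r.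
have := excess_prod_ge0 a b; case: eqP => _; nra.
Qed.

Lemma esum_coupling1_row a :
  (\esum_(b in [set: T]) (coupling 1 a b)%:E = (p a)%:E)%E.
Proof. by rewrite esum_coupling_row // mul1r subrKC. Qed.

Lemma esum_coupling1_col b :
  (\esum_(a in [set: T]) (coupling 1 a b)%:E = (q b)%:E)%E.
Proof. by rewrite esum_coupling_col // mul1r subrKC. Qed.

Definition tuple_coupling (w : R) n (s t : n.-tuple T) :=
  \prod_(i < n) coupling w (tnth s i) (tnth t i).

Lemma tuple_coupling_ge0 w n (s t : n.-tuple T) : 0 <= w -> 0 <= tuple_coupling w s t.
Proof. by move=> w0; apply: prodr_ge0 => i _; apply: coupling_ge0. Qed.

Lemma esum_tuple_coupling_row n (s : n.-tuple T) :
  (\esum_(t in [set: n.-tuple T]) (tuple_coupling 1 s t)%:E =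
   (\prod_(i < n) p (tnth s i))%:E)%E.
Proof.
rewrite /tuple_coupling.
apply: (esum_tuple_prod (f := fun i => coupling 1 (tnth s i))) => [i b|i].
  exact: coupling_ge0.
exact: esum_coupling1_row.
Qed.

Lemma esum_tuple_coupling_col n (t : n.-tuple T) :
  (\esum_(s in [set: n.-tuple T]) (tuple_coupling 1 s t)%:E =
   (\prod_(i < n) q (tnth t i))%:E)%E.
Proof.
rewrite /tuple_coupling.
apply: (esum_tuple_prod (f := fun i a => coupling 1 a (tnth t i))) => [i a|i].
  exact: coupling_ge0.
exact: esum_coupling1_col.
Qed.

Lemma esum_tuple_coupling w n : 0 <= w ->
  (\esum_(s in [set: n.-tuple T]) \esum_(t in [set: n.-tuple T])
     (tuple_coupling w s t)%:E = ((1 - kappa + w * kappa) ^+ n)%:E)%E.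
Proof.
move=> w0; transitivity ((\prod_(i < n) (1 - kappa + w * kappa))%:E)%E; last first.
  by rewrite prodr_const card_ord.
have row_ge0 a : 0 <= overlap a + w * excess p a.
  by rewrite addr_ge0 ?overlap_ge0 ?mulr_ge0 ?excess_p_ge0.
rewrite -(esum_tuple_prod (f := fun _ a => overlap a + w * excess p a)) // => [|i]; last first.
  exact: esum_overlap_scaled_excess.
apply: eq_esum => s _.
apply: (esum_tuple_prod (f := fun i => coupling w (tnth s i))) => [i b|i].
  exact: coupling_ge0.
exact: esum_coupling_row.
Qed.

(* Markov's inequality for the exponential moment of [hamming s t]. *)
Lemma tuple_coupling_tail_le l (c : R) n (s t : n.-tuple T) : 0 <= l ->
  (if (hamming s t)%:R <= c then 0 else tuple_coupling 1 s t) <=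
  expR (- (l * c)) * tuple_coupling (expR l) s t.
Proof.
move=> l0; have W0 : 0 <= tuple_coupling 1 s t := tuple_coupling_ge0 _ _ ler01.
case: ifPn => [_|].
  exact: mulr_ge0 (expR_ge0 _) (tuple_coupling_ge0 _ _ (expR_ge0 _)).
rewrite -ltNge => far.
have tilt_ge1 : 1 <= expR (l * ((hamming s t)%:R - c)).
  by apply/expR_ge1/mulr_ge0 => //; rewrite subr_ge0 ltW.
apply: (le_trans (ler_peMr W0 tilt_ge1)).
rewrite mulrBr exp.expRD mulrA [X in X <= _]mulrC.
apply: ler_wpM2l; first exact: expR_ge0.
rewrite (mulrC l) expRM_natl -prod_if_eq_hamming /tuple_coupling -big_split /=.
apply: ler_prod => i _; rewrite coupling_tilt_le ?expR_ge1 // andbT.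
by rewrite mulr_ge0 ?coupling_ge0 //; case: ifP; rewrite ?expR_ge0.
Qed.

Lemma tuple_coupling_tail (eps delta : R) n : kappa <= 1 -> 0 < eps -> 0 < delta ->
  8 * ln (1 / delta) / eps ^+ 2 <= n%:R ->
  (\esum_(s in [set: n.-tuple T]) \esum_(t in [set: n.-tuple T])
     (if (hamming s t)%:R <= (kappa + eps) * n%:R then 0 else tuple_coupling 1 s t)%:E
   <= delta%:E)%E.
Proof.
move=> kappa_le1 eps_gt0 delta_gt0 n_ge.
have [eps_ge1|eps_lt1] := lerP 1 eps.
  rewrite esum1 ?lee_fin ?ltW // => s _; rewrite esum1 // => t _; rewrite ifT //.
  have : 0 <= (kappa + eps - 1) * n%:R.
    by rewrite mulr_ge0 // subr_ge0 (le_trans eps_ge1) // ler_wpDl // ltW.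
  by have := hamming_le s t; rewrite -(ler_nat R); lra.
set l := eps / 4; set c := (kappa + eps) * n%:R.
have tilted_ge0 s t : (0 <= (tuple_coupling (expR l) s t)%:E)%E.
  by rewrite lee_fin; exact: tuple_coupling_ge0 (expR_ge0 _).
have tail_le s t : ((if (hamming s t)%:R <= c then 0 else tuple_coupling 1 s t)%:E <=
    (expR (- (l * c)))%:E * (tuple_coupling (expR l) s t)%:E)%E.
  by rewrite -EFinM lee_fin; apply: tuple_coupling_tail_le; rewrite /l; lra.
apply: (@le_trans _ _ (\esum_(s in [set: n.-tuple T]) ((expR (- (l * c)))%:E *
    \esum_(t in [set: n.-tuple T]) (tuple_coupling (expR l) s t)%:E))%E).
  apply: le_esum => s _; rewrite -esumZl ?expR_ge0 //.
  by apply: le_esum => t _; exact: tail_le.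
rewrite esumZl ?expR_ge0 // => [|s]; last by apply: esum_ge0 => t _.
rewrite esum_tuple_coupling ?expR_ge0 // -EFinM lee_fin.
apply: chernoff_bound => //; first by rewrite kappa_le1 ltW.
by rewrite eps_gt0 /=; lra.
Qed.
End MaximalCoupling.

Lemma esum_dpmf_shift (Zd : distZ) (c : int) :
  (\esum_(x in [set: int]) (dpmf Zd (x - c))%:E = 1)%E.
Proof.
rewrite -(dpmf_sum1 Zd) [RHS](reindex_esum [set: int] [set: int] (fun x => x - c)) //.
split=> [//|x y _ _ /addIr //|y _]; by exists (y + c) => //; rewrite addrK.
Qed.

Lemma dTV_EFin (p q : int -> R) (k : R) : dTV p q = k%:E ->
  (\esum_(z in [set: int]) (`|p z - q z|)%:E = (2 * k)%:E)%E.
Proof.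
have : (0 <= \esum_(z in [set: int]) (`|p z - q z|)%:E)%E.
  by apply: esum_ge0 => z _; rewrite lee_fin.
rewrite /dTV; case: (\esum_(z in _) _) => [x| |] //= _.
  by move=> [<-]; congr (_%:E); lra.
by rewrite mulr_infty gtr0_sg // mul1e.
Qed.

Lemma dTV_triangle (p q r : int -> R) : (dTV p r <= dTV p q + dTV q r)%E.
Proof.
rewrite /dTV -ge0_muleDr; last 2 first.
- by apply: esum_ge0 => z _; rewrite lee_fin.
- by apply: esum_ge0 => z _; rewrite lee_fin.
apply: lee_wpmul2l; first by rewrite lee_fin.
rewrite -esumD => [||z _]; last by rewrite lee_fin.
- apply: le_esum => z _; rewrite -EFinD lee_fin.
  by rewrite (le_trans _ (ler_normD _ _)) // addrA subrK.
- by move=> z _; rewrite lee_fin.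
Qed.

(* [\big[+%R/0%R]] because [\sum] inside [%E] denotes the extended-real sum. *)
Lemma dTV_sum_le n (f g : 'I_n -> int -> R) :
  (dTV (fun x => \big[+%R/0%R]_(i < n) f i x) (fun x => \big[+%R/0%R]_(i < n) g i x) <=
   \sum_(i < n) dTV (f i) (g i))%E.
Proof.
rewrite /dTV -ge0_sume_distrr => [|i _]; last by apply: esum_ge0 => z _; rewrite lee_fin.
apply: lee_wpmul2l; first by rewrite lee_fin.
rewrite -esum_sum => [|z i _ _]; last by rewrite lee_fin.
apply: le_esum => z _; rewrite sumEFin lee_fin -sumrB.
exact: ler_norm_sum.
Qed.

Lemma dTV_shift_le (Zd : distZ) (a b : int) (n : nat) :
  (dTV (fun x => dpmf Zd (x - a) / n%:R)%R (fun x => dpmf Zd (x - b) / n%:R)%R <=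
   ((a != b)%:R / n%:R)%:E)%E.
Proof.
have [<-|ab] := eqVneq a b.
  by rewrite /dTV esum1 ?mule0 ?eqxx ?mul0r // => x _; rewrite subrr normr0.
rewrite /dTV /=.
have n_inv_ge0 : 0 <= n%:R^-1 :> R by rewrite invr_ge0.
apply: (@le_trans _ _ ((1/2)%:E * \esum_(x in [set: int])
    (n%:R^-1%:E * ((dpmf Zd (x - a))%:E + (dpmf Zd (x - b))%:E)))%E).
  apply: lee_wpmul2l; first by rewrite lee_fin.
  apply: le_esum => x _; rewrite -EFinD -EFinM lee_fin -mulrBl normrM (ger0_norm n_inv_ge0).
  rewrite mulrC ler_wpM2l // (le_trans (ler_normB _ _)) //.
  by rewrite !ger0_norm ?dpmf_ge0.
rewrite esumZl // => [|x]; last by rewrite -EFinD lee_fin addr_ge0 ?dpmf_ge0.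
rewrite esumD => [||x _]; last by rewrite lee_fin dpmf_ge0.
- by rewrite !esum_dpmf_shift -EFinD -!EFinM lee_fin; lra.
- by move=> x _; rewrite lee_fin dpmf_ge0.
Qed.

Lemma dTV_unif_plus n (s t : n.-tuple int) (Zd : distZ) :
  (dTV (unif_plus s Zd) (unif_plus t Zd) <= ((hamming s t)%:R / n%:R)%:E)%E.
Proof.
apply: (le_trans (dTV_sum_le (fun i x => dpmf Zd (x - tnth s i) / n%:R)
                             (fun i x => dpmf Zd (x - tnth t i) / n%:R))).
apply: le_trans; first by apply: lee_sum => i _; exact: dTV_shift_le.
by rewrite sumEFin -mulr_suml -natr_sum.
Qed.

Lemma unif_plus_close (p q : int -> R) (Zd : distZ) n (s t : n.-tuple int) (kappa eps : R) :
  (0 < n)%nat -> dTV p q = kappa%:E ->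
  (hamming s t)%:R <= (kappa + eps) * n%:R ->
  (dTV (unif_plus s Zd) p <= eps%:E)%E ->
  (dTV (unif_plus t Zd) q <= (2 * eps + 2 * kappa)%:E)%E.
Proof.
move=> n_gt0 pq_kappa close s_good.
have n_pos : 0 < n%:R :> R by rewrite ltr0n.
have t_s : (dTV (unif_plus t Zd) (unif_plus s Zd) <= (kappa + eps)%:E)%E.
  by rewrite (le_trans (dTV_unif_plus _ _ _)) // hammingC lee_fin ler_pdivrMr.
have s_q : (dTV (unif_plus s Zd) q <= (eps + kappa)%:E)%E.
  by rewrite (le_trans (dTV_triangle _ p _)) // pq_kappa EFinD leeD.
apply: (le_trans (dTV_triangle _ (unif_plus s Zd) _)).
by rewrite (le_trans (leeD t_s s_q)) // -EFinD lee_fin; lra.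
Qed.

Lemma coupling_esum_le (A B : choiceType) (w : A -> B -> R) (mu : A -> R) (nu : B -> R)
    (close : A -> B -> bool) (G : set A) (G' : set B) :
  (forall s t, 0 <= w s t) ->
  (forall s, (\esum_(t in [set: B]) (w s t)%:E = (mu s)%:E)%E) ->
  (forall t, (\esum_(s in [set: A]) (w s t)%:E = (nu t)%:E)%E) ->
  (forall s t, G s -> close s t -> G' t) ->
  (\esum_(s in G) (mu s)%:E <= \esum_(t in G') (nu t)%:E +
     \esum_(s in [set: A]) \esum_(t in [set: B]) (if close s t then 0 else w s t)%:E)%E.
Proof.
move=> w_ge0 mu_w nu_w closeG.
have restr_ge0 (b : bool) s t : (0 <= if b then (w s t)%:E else 0)%E.
  by case: b; rewrite ?lee_fin.
rewrite esum_mkcond [X in (_ <= X + _)%E]esum_mkcond.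
have -> : (\esum_(s in [set: A]) (if s \in G then (mu s)%:E else 0) =
    \esum_(s in [set: A]) \esum_(t in [set: B]) if s \in G then (w s t)%:E else 0)%E.
  by apply: eq_esum => s _; case: ifP => _; rewrite ?mu_w ?esum1.
have -> : (\esum_(t in [set: B]) (if t \in G' then (nu t)%:E else 0) =
    \esum_(s in [set: A]) \esum_(t in [set: B]) if t \in G' then (w s t)%:E else 0)%E.
  rewrite esum_swap => [|s t]; last exact: restr_ge0.
  apply: eq_esum => t _.
  by case: ifP => _; rewrite ?nu_w ?esum1.
rewrite -esumD; last 2 first.
- by move=> s _; apply: esum_ge0 => t _; exact: restr_ge0.
- by move=> s _; apply: esum_ge0 => t _; rewrite lee_fin; case: ifP.
apply: le_esum => s _; rewrite -esumD; last 2 first.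
- by move=> t _; exact: restr_ge0.
- by move=> t _; rewrite lee_fin; case: ifP.
apply: le_esum => t _.
have [sG|_] := boolP (s \in G); last by rewrite adde_ge0 // lee_fin; case: ifP.
have [near|far] := boolP (close s t).
  by rewrite (mem_set (closeG _ _ (set_mem sG) near)) adde0.
by rewrite leeDr.
Qed.

Theorem lemma30 :
  exists C : R, 0 < C /\
  forall (X X' Zd : distZ) (eps delta kappa : R) (T T0 : nat),
    0 < eps -> 0 < delta ->
    kernel_learnable X Zd eps delta T ->
    dTV (dpmf X) (dpmf X') = kappa%:E -> 0 < kappa -> kappa < 1 ->
    (T < T0)%nat ->
    C * ln (1 / delta) / eps ^+ 2 < T0%:R ->
    kernel_learnable X' Zd (2 * eps + 2 * kappa) (2 * delta) T0.
Proof.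
exists 8; split=> [|X X' Zd eps delta kappa T T0 eps_gt0 delta_gt0 learn_X dist_XX'
  kappa_gt0 kappa_lt1 T_lt_T0 T0_large n T0_le_n]; first lra.
have n_gt0 : (0 < n)%nat := leq_trans (leq_ltn_trans (leq0n T) T_lt_T0) T0_le_n.
have n_large : 8 * ln (1 / delta) / eps ^+ 2 <= n%:R.
  by rewrite ltW // (lt_le_trans T0_large) // ler_nat.
have good_X := learn_X n (leq_trans (ltnW T_lt_T0) T0_le_n).
move: (dpmf_ge0 X) (dpmf_ge0 X') (dpmf_sum1 X) (dpmf_sum1 X') (dTV_EFin dist_XX').
move=> X_ge0 X'_ge0 X_sum1 X'_sum1 dist.
have coupled := coupling_esum_le
  (close := fun s t : n.-tuple int => (hamming s t)%:R <= (kappa + eps) * n%:R)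
  (G := [set s | (dTV (unif_plus s Zd) (dpmf X) <= eps%:E)%E])
  (G' := [set t | (dTV (unif_plus t Zd) (dpmf X') <= (2 * eps + 2 * kappa)%:E)%E])
  (fun s t => tuple_coupling_ge0 X_ge0 X'_ge0 kappa_gt0 s t ler01)
  (fun s => esum_tuple_coupling_row X_ge0 X'_ge0 X_sum1 X'_sum1 kappa_gt0 dist s)
  (fun t => esum_tuple_coupling_col X_ge0 X'_ge0 X_sum1 X'_sum1 kappa_gt0 dist t)
  (fun s t s_good close => unif_plus_close n_gt0 dist_XX' close s_good).
have tail := tuple_coupling_tail X_ge0 X'_ge0 X_sum1 X'_sum1 kappa_gt0 dist
  (ltW kappa_lt1) eps_gt0 delta_gt0 n_large.
have bound := le_trans good_X (le_trans coupled (leeD2l _ tail)).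
rewrite /prob_iid (_ : (1 - 2 * delta)%:E = ((1 - delta)%:E - delta%:E)%E); last first.
  by rewrite -EFinB; congr (_%:E); lra.
by rewrite leeBlDr.
Qed.
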